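(* Let $0<\epsilon\le 1$, $r>0$ be constants, $p_2=\frac{1-\epsilon}{n}$, $p_3=\frac{r}{n\ln n}$ (so $p_2=0$ when $\epsilon=1$), and $K_0=\max\{1,\tfrac{2(9+\epsilon)}{r}\}$. For any two distinct vertices $v_1,v_2$ of $\mathbb{G}(n,p_2,p_3)$, $$\Pr\big[|C_{\{v_1,v_2\}}|\ge K_0\ln n\big]\le n^{I_{\epsilon,r}+o(1)}\qquad(n\to\infty),$$ where $I_{\epsilon,r}=\int_0^{\epsilon/r}[1-\lambda(\omega)+\ln\lambda(\omega)]d\omega=-\frac1r\big[\epsilon-\frac{\epsilon^2}{2}+(1-\epsilon)\ln(1-\epsilon)\big]$ (with $(1-\epsilon)\ln(1-\epsilon)=0$ for $\epsilon=1$) and $\lambda(x)=1-\epsilon+rx$.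
   Context: $\mathbb{G}(n,p_2,p_3)$ is the random hypergraph on a vertex set $V$ with $|V|=n$ in which each of the $\binom n2$ possible 2-element edges is present with probability $p_2$ and each of the $\binom n3$ possible 3-element hyperedges is present with probability $p_3$, all independently. Propagation process from a set of vertices: one maintains a set $\mathcal{Y}_t$ of active vertices and a set $\mathcal{D}_t$ of inactive vertices; vertices in neither set are unexplored. At time $t=0,1,2,\dots$, while $\mathcal{Y}_t\neq\emptyset$, pick an active vertex $v_t\in\mathcal{Y}_t$ and let $U_t$ be the set of unexplored vertices $u$ such that $\{v_t,u\}$ is a 2-edge or $\{v_t,u,w\}$ is a 3-edge for some $w\in\mathcal{D}_t$; set $\mathcal{Y}_{t+1}=(\mathcal{Y}_t\cup U_t)\setminus\{v_t\}$ and $\mathcal{D}_{t+1}=\mathcal{D}_t\cup\{v_t\}$. The process stops at $T=\min\{t:\mathcal{Y}_t=\emptyset\}$. $C_{\{v_1,v_2\}}$ denotes $\mathcal{D}_T$ for the process started from $\mathcal{Y}_0=\{v_1,v_2\}$, $\mathcal{D}_0=\emptyset$, so $|C_{\{v_1,v_2\}}|=T$. *)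

From Stdlib Require Import Reals Lra Arith List.
Import ListNotations.
Open Scope R_scope.

(** Vertices of G(n,p2,p3) are 0..n-1.  A (hyper)edge is encoded by the
    increasingly sorted list of its vertices. *)

Fixpoint ins (a : nat) (l : list nat) : list nat :=
  match l with
  | [] => [a]
  | b :: t => if Nat.leb a b then a :: b :: t else b :: ins a t
  end.

Fixpoint srt (l : list nat) : list nat :=
  match l with [] => [] | a :: t => ins a (srt t) end.

Definition pairs (n : nat) : list (list nat) :=
  flat_map (fun j => map (fun i => [i; j]) (seq 0 j)) (seq 0 n).

Definition triples (n : nat) : list (list nat) :=
  flat_map (fun k => flat_map (fun j => map (fun i => [i; j; k]) (seq 0 j)) (seq 0 k))
           (seq 0 n).

Definition hgraph := list nat -> bool.

Definition upd (H : hgraph) (e : list nat) (b : bool) : hgraph :=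
  fun a => if list_eq_dec Nat.eq_dec a e then b else H a.

(** Probability of a (boolean) event on hypergraphs when each item (e,p)
    of the list is independently present with probability p (items not in
    the list are absent). *)
Fixpoint prob_aux (its : list (list nat * R)) (acc : hgraph)
         (ev : hgraph -> bool) : R :=
  match its with
  | [] => if ev acc then 1 else 0
  | (e, p) :: t => p * prob_aux t (upd acc e true) ev
                   + (1 - p) * prob_aux t (upd acc e false) ev
  end.

Definition Gprob (n : nat) (p2 p3 : R) (ev : hgraph -> bool) : R :=
  prob_aux (map (fun e => (e, p2)) (pairs n) ++ map (fun e => (e, p3)) (triples n))
           (fun _ => false) ev.

(** Propagation process.  States are (Y, D) = (active, inactive) vertex sets
    given as predicates.  [sel Y D] is the rule used to pick the active
    vertex v_t (arbitrary, subject to validity). *)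
Definition selector := (nat -> bool) -> (nat -> bool) -> nat.

Definition valid_sel (n : nat) (sel : selector) : Prop :=
  forall Y D : nat -> bool, (exists u, (u < n)%nat /\ Y u = true) ->
    (sel Y D < n)%nat /\ Y (sel Y D) = true.

Definition step (n : nat) (H : hgraph) (sel : selector)
           (Y D : nat -> bool) : (nat -> bool) * (nat -> bool) :=
  let v := sel Y D in
  let U := fun u => (Nat.ltb u n && negb (Y u) && negb (D u) &&
             (H (srt [v; u]) ||
              existsb (fun w => D w && H (srt [v; u; w])) (seq 0 n)))%bool in
  (fun u => ((Y u || U u) && negb (Nat.eqb u v))%bool,
   fun u => (D u || Nat.eqb u v)%bool).

(** Runs the process, counting steps; returns T = min{t : Y_t = empty}
    (fuel n+1 suffices since each step moves one vertex into D). *)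
Fixpoint run (n : nat) (H : hgraph) (sel : selector) (fuel : nat)
         (Y D : nat -> bool) (t : nat) : nat :=
  match fuel with
  | O => t
  | S f => if existsb Y (seq 0 n)
           then let YD := step n H sel Y D in run n H sel f (fst YD) (snd YD) (S t)
           else t
  end.

(** |C_{v1,v2}| = T for the process started from Y_0 = {v1,v2}, D_0 = {}. *)
Definition comp_size (n : nat) (H : hgraph) (sel : selector) (v1 v2 : nat) : nat :=
  run n H sel (S n) (fun u => (Nat.eqb u v1 || Nat.eqb u v2)%bool) (fun _ => false) O.

Definition p2 (eps : R) (n : nat) : R := (1 - eps) / INR n.
Definition p3 (r : R) (n : nat) : R := r / (INR n * ln (INR n)).
Definition K0 (eps r : R) : R := Rmax 1 (2 * (9 + eps) / r).

(** I_{eps,r} in closed form; note Stdlib's [ln 0 = 0], so the term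
    (1-eps) ln(1-eps) is 0 for eps = 1, as in the paper's convention. *)
Definition Ier (eps r : R) : R :=
  - (1 / r) * (eps - eps ^ 2 / 2 + (1 - eps) * ln (1 - eps)).

Definition big_event (eps r : R) (n : nat) (sel : selector) (v1 v2 : nat)
  : hgraph -> bool :=
  fun H => if Rle_dec (K0 eps r * ln (INR n)) (INR (comp_size n H sel v1 v2))
           then true else false.

(* A Chernoff-type bound on the exploration.  At step t the active vertex v_t probes only
   edges that were never probed before, and the expected number of vertices it activates is at
   most lam_t = a + r t / ln n for any a >= 1 - eps.  Hence, with theta_t = -ln lam_t, the
   quantity exp (theta_t |Y_t| + sum_{s<t} (1 - lam_s + ln lam_s)) is a supermartingale as long
   as lam_t <= 1.  Surviving m ~ (1 - a) ln n / r steps thus has probability at most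
   a^-2 exp (sum_{s<m} (1 - lam_s + ln lam_s)), a Riemann sum for (ln n / r) times the integral
   defining I_{eps,r}, up to O(1) and to the error made by starting from a > 1 - eps (which keeps
   ln a finite when eps = 1); choosing a close to 1 - eps makes that error at most delta ln n. *)

From Stdlib Require Import Reals Lra Lia List Permutation FunctionalExtensionality Bool ZArith.
From Stdlib Require FinFun.
Import ListNotations.
Open Scope R_scope.

Fixpoint rsum {A : Type} (f : A -> R) (l : list A) : R :=
  match l with [] => 0 | x :: t => f x + rsum f t end.

Lemma rsum_app {A : Type} (f : A -> R) (l1 l2 : list A) :
  rsum f (l1 ++ l2) = rsum f l1 + rsum f l2.
Proof. induction l1 as [|x t IH]; simpl; [ring | rewrite IH; ring]. Qed.

Lemma rsum_flat_map_le {A B : Type} (pr : B -> R) (f : A -> list B) (l : list A) (c : R) :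
  (forall x, In x l -> rsum pr (f x) <= c) -> rsum pr (flat_map f l) <= INR (length l) * c.
Proof.
  induction l as [|x t IH]; intros Hf; cbn [flat_map length rsum]; [simpl; lra|].
  rewrite rsum_app, S_INR.
  pose proof (Hf x (or_introl eq_refl)).
  pose proof (IH (fun y Hy => Hf y (or_intror Hy))).
  lra.
Qed.

Lemma exp_le_exp (x y : R) : x <= y -> exp x <= exp y.
Proof. intros [H|H]; [left; apply exp_increasing; exact H | rewrite H; lra]. Qed.

Lemma ln_le_ln (x y : R) : 0 < x -> x <= y -> ln x <= ln y.
Proof. intros Hx [H|H]; [left; apply ln_increasing; assumption | rewrite H; lra]. Qed.

Lemma ln_le_sub1 (x : R) : 0 < x -> ln x <= x - 1.
Proof. intros Hx; pose proof (exp_ineq1_le (ln x)); rewrite exp_ln in H by exact Hx; lra. Qed.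

Lemma filter_perm_length (f : nat -> bool) l l' :
  Permutation l l' -> length (filter f l) = length (filter f l').
Proof.
  induction 1; simpl; try destruct (f x); try destruct (f y); simpl; congruence.
Qed.

Lemma filter_length_mono {A : Type} (a b : A -> bool) l :
  (forall x, a x = true -> b x = true) -> (length (filter a l) <= length (filter b l))%nat.
Proof.
  intros Hab; induction l as [|x t IH]; simpl; [lia|].
  destruct (a x) eqn:E; [rewrite (Hab x E); simpl; lia | destruct (b x); simpl; lia].
Qed.

Lemma filter_length_orb {A : Type} (a b : A -> bool) l :
  (length (filter (fun x => a x || b x) l) <= length (filter a l) + length (filter b l))%nat.
Proof. induction l as [|x t IH]; simpl; [lia | destruct (a x), (b x); simpl; lia]. Qed.

Lemma filter_length_remove (P : nat -> bool) v l : In v l -> P v = true ->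
  (length (filter (fun x => P x && negb (Nat.eqb x v)) l) + 1 <= length (filter P l))%nat.
Proof.
  induction l as [|x t IH]; simpl; intros Hin HP; [tauto|].
  destruct (Nat.eqb_spec x v) as [->|Hxv].
  - rewrite HP, andb_false_r; simpl.
    pose proof (filter_length_mono (fun x => P x && negb (Nat.eqb x v)) P t
                  (fun x Hx => proj1 (proj1 (andb_true_iff _ _) Hx))).
    lia.
  - destruct Hin as [->|Hin]; [congruence|].
    specialize (IH Hin HP); rewrite andb_true_r; destruct (P x); simpl; lia.
Qed.

Lemma filter_length_eqb_le1 v l : NoDup l -> (length (filter (fun u => Nat.eqb u v) l) <= 1)%nat.
Proof.
  induction 1 as [|x t Hx _ IH]; simpl; [lia|].
  destruct (Nat.eqb_spec x v) as [->|]; [|exact IH].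
  rewrite (filter_ext_in _ (fun _ => false)), filter_false; [simpl; lia|].
  intros u Hu; apply Nat.eqb_neq; intros ->; contradiction.
Qed.

Lemma filter_length_cover (U G : nat -> bool) (f : nat -> list (list nat)) (H : hgraph) l :
  (forall x, U x = true -> G x = true /\ exists e, In e (f x) /\ H e = true) ->
  (length (filter U l) <= length (filter H (flat_map f (filter G l))))%nat.
Proof.
  intros HU; induction l as [|x t IH]; simpl; [lia|].
  destruct (U x) eqn:Ux.
  - destruct (HU x Ux) as [-> [e [He HHe]]]; simpl; rewrite filter_app, length_app.
    enough (0 < length (filter H (f x)))%nat by lia.
    destruct (filter H (f x)) eqn:E; simpl; [|lia].
    assert (Hin : In e (filter H (f x))) by (apply filter_In; auto).
    rewrite E in Hin; destruct Hin.
  - destruct (G x); simpl; [rewrite filter_app, length_app|]; lia.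
Qed.

Lemma NoDup_flat_map {A B : Type} (f : A -> list B) l : NoDup l ->
  (forall x, In x l -> NoDup (f x)) ->
  (forall x y e, In x l -> In y l -> x <> y -> In e (f x) -> In e (f y) -> False) ->
  NoDup (flat_map f l).
Proof.
  induction 1 as [|x t Hx Ht IH]; simpl; intros Hf Hd; [constructor|].
  apply NoDup_app.
  - apply Hf; left; reflexivity.
  - apply IH; [intros; apply Hf; right; assumption|].
    intros y z e Hy Hz; apply Hd; right; assumption.
  - intros e He1 He2; apply in_flat_map in He2 as [y [Hy He2]].
    apply (Hd x y e); [left | right | intros <- | |]; auto.
Qed.

Lemma existsb_ext_in {A : Type} (f g : A -> bool) l :
  (forall x, In x l -> f x = g x) -> existsb f l = existsb g l.
Proof. induction l as [|x t IH]; simpl; intros Hfg; [|rewrite Hfg, IH by auto]; reflexivity. Qed.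

(** * Expectations over independent edges *)

Fixpoint expect (its : list (list nat * R)) (acc : hgraph) (F : hgraph -> R) : R :=
  match its with
  | [] => F acc
  | (e, p) :: t => p * expect t (upd acc e true) F + (1 - p) * expect t (upd acc e false) F
  end.

Definition indicator (ev : hgraph -> bool) (H : hgraph) : R := if ev H then 1 else 0.

Lemma prob_aux_expect its acc ev : prob_aux its acc ev = expect its acc (indicator ev).
Proof. revert acc; induction its as [|[e p] t IH]; intros acc; simpl; rewrite ?IH; reflexivity. Qed.

Definition agree_off (l : list (list nat)) (H H' : hgraph) : Prop :=
  forall e, ~ In e l -> H e = H' e.

Lemma agree_off_upd l e b H acc :
  agree_off l H (upd acc e b) -> agree_off (e :: l) H acc.
Proof.
  intros Hag e' He'; rewrite Hag by (intro; apply He'; right; assumption).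
  unfold upd; destruct (list_eq_dec Nat.eq_dec e' e) as [->|]; [destruct He'; left |]; reflexivity.
Qed.

Lemma agree_off_upd_both l e b H H' :
  agree_off (e :: l) H H' -> agree_off l (upd H e b) (upd H' e b).
Proof.
  intros Hag e' He'; unfold upd; destruct (list_eq_dec Nat.eq_dec e' e); [reflexivity|].
  apply Hag; intros [->|]; tauto.
Qed.

Lemma expect_ext its acc F G :
  (forall H, agree_off (map fst its) H acc -> F H = G H) ->
  expect its acc F = expect its acc G.
Proof.
  revert acc; induction its as [|[e p] t IH]; simpl; intros acc HFG.
  - apply HFG; intros ? _; reflexivity.
  - rewrite !(IH (upd acc e _)); [reflexivity | |];
      intros H Hag; apply HFG, (agree_off_upd _ _ _ _ _ Hag).
Qed.

Lemma expect_le its acc F G :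
  Forall (fun it => 0 <= snd it <= 1) its ->
  (forall H, agree_off (map fst its) H acc -> F H <= G H) ->
  expect its acc F <= expect its acc G.
Proof.
  revert acc; induction its as [|[e p] t IH]; simpl; intros acc Hp HFG.
  - apply HFG; intros ? _; reflexivity.
  - apply Forall_cons_iff in Hp as [[Hp0 Hp1] Ht]; simpl in Hp0, Hp1.
    assert (Hb : forall b, expect t (upd acc e b) F <= expect t (upd acc e b) G).
    { intro b; apply IH; [exact Ht|]; intros H Hag; apply HFG, (agree_off_upd _ _ _ _ _ Hag). }
    pose proof (Hb true); pose proof (Hb false).
    apply Rplus_le_compat; apply Rmult_le_compat_l; lra.
Qed.

Lemma expect_agree_off its acc acc' F :
  agree_off (map fst its) acc acc' -> expect its acc F = expect its acc' F.
Proof.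
  revert acc acc'; induction its as [|[e p] t IH]; simpl; intros acc acc' Hag.
  - f_equal; extensionality e; apply Hag; tauto.
  - rewrite !(IH (upd acc e _) (upd acc' e _)) by (apply agree_off_upd_both; exact Hag).
    reflexivity.
Qed.

Lemma expect_scale its acc c F : expect its acc (fun H => c * F H) = c * expect its acc F.
Proof. revert acc; induction its as [|[e p] t IH]; simpl; intros; rewrite ?IH; ring. Qed.

Lemma expect_const its acc c : expect its acc (fun _ => c) = c.
Proof. revert acc; induction its as [|[e p] t IH]; simpl; intros; rewrite ?IH; ring. Qed.

Lemma expect_app its1 its2 acc F :
  expect (its1 ++ its2) acc F = expect its1 acc (fun H => expect its2 H F).
Proof. revert acc; induction its1 as [|[e p] t IH]; simpl; intros; rewrite ?IH; reflexivity. Qed.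

Lemma upd_comm H e1 e2 b1 b2 :
  e1 <> e2 -> upd (upd H e1 b1) e2 b2 = upd (upd H e2 b2) e1 b1.
Proof.
  intros Hne; extensionality x; unfold upd.
  destruct (list_eq_dec Nat.eq_dec x e2), (list_eq_dec Nat.eq_dec x e1); congruence.
Qed.

Lemma expect_perm its its' acc F :
  Permutation its its' -> NoDup (map fst its) -> expect its acc F = expect its' acc F.
Proof.
  intros HP; revert acc; induction HP as [|[e p] ? ? ? IH|[e1 p1] [e2 q2] ?|? ? ? HP1 IH1 ? IH2];
    simpl; intros acc HN.
  - reflexivity.
  - inversion HN; rewrite !IH by assumption; reflexivity.
  - inversion HN as [|? ? Hn1]; subst; simpl in Hn1.
    rewrite !(upd_comm _ e2 e1) by (intros ->; apply Hn1; left; reflexivity); ring.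
  - rewrite IH1, IH2 by (try apply (Permutation_NoDup (Permutation_map fst HP1)); assumption).
    reflexivity.
Qed.

Definition items (pr : list nat -> R) (L : list (list nat)) : list (list nat * R) :=
  map (fun e => (e, pr e)) L.

Lemma map_fst_items pr L : map fst (items pr L) = L.
Proof. unfold items; rewrite map_map; apply map_id. Qed.

Lemma items_in_unit pr L :
  (forall e, 0 <= pr e <= 1) -> Forall (fun it => 0 <= snd it <= 1) (items pr L).
Proof. intros Hpr; apply Forall_map, Forall_forall; intros e _; apply Hpr. Qed.

Lemma expect_nodup pr L acc F :
  expect (items pr (nodup (list_eq_dec Nat.eq_dec) L)) acc F = expect (items pr L) acc F.
Proof.
  revert acc; induction L as [|e L IH]; intros acc; simpl; [reflexivity|].
  destruct (in_dec (list_eq_dec Nat.eq_dec) e L) as [Hin|Hin]; simpl; rewrite !IH; [|reflexivity].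
  rewrite !(expect_agree_off _ (upd acc e _) acc); [ring| |];
    intros e' He'; rewrite map_fst_items in He'; unfold upd;
    destruct (list_eq_dec Nat.eq_dec e' e) as [->|]; tauto.
Qed.

Definition remove_edges (E L : list (list nat)) : list (list nat) :=
  filter (fun e => if in_dec (list_eq_dec Nat.eq_dec) e E then false else true) L.

Lemma In_remove_edges E L e : In e (remove_edges E L) <-> In e L /\ ~ In e E.
Proof.
  unfold remove_edges; rewrite filter_In.
  destruct (in_dec (list_eq_dec Nat.eq_dec) e E); intuition discriminate.
Qed.

Lemma expect_exp_count_le pr th L acc :
  (forall e, 0 <= pr e <= 1) -> 0 <= th -> NoDup L ->
  expect (items pr L) acc (fun H => exp (th * INR (length (filter H L))))
    <= exp ((exp th - 1) * rsum pr L).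
Proof.
  intros Hpr Hth; revert acc; induction L as [|e L IH]; intros acc HN; simpl.
  - rewrite Rmult_0_r, Rmult_0_r; lra.
  - inversion HN as [|? ? HeL HNL]; subst.
    set (X b := expect (items pr L) (upd acc e b) (fun H => exp (th * INR (length (filter H L))))).
    assert (Hb : forall b, expect (items pr L) (upd acc e b)
        (fun H => exp (th * INR (length (if H e then e :: filter H L else filter H L))))
        = (if b then exp th else 1) * X b).
    { intro b; unfold X; rewrite <- expect_scale; apply expect_ext; intros H Hag.
      rewrite Hag by (rewrite map_fst_items; exact HeL); unfold upd.
      destruct (list_eq_dec Nat.eq_dec e e) as [_|]; [|congruence].
      destruct b; simpl length; [rewrite S_INR, Rmult_plus_distr_l, Rmult_1_r, exp_plus|]; ring. }
    rewrite !Hb.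
    set (M := exp ((exp th - 1) * rsum pr L)).
    assert (HX : forall b, X b <= M) by (intro b; apply IH; exact HNL).
    destruct (Hpr e) as [Hp0 Hp1].
    assert (1 <= exp th) by (rewrite <- exp_0; apply exp_le_exp; exact Hth).
    assert (pr e * exp th * X true <= pr e * exp th * M)
      by (apply Rmult_le_compat_l; [nra | apply HX]).
    assert ((1 - pr e) * X false <= (1 - pr e) * M)
      by (apply Rmult_le_compat_l; [lra | apply HX]).
    pose proof (exp_ineq1_le (pr e * (exp th - 1))).
    replace ((exp th - 1) * (pr e + rsum pr L))
      with (pr e * (exp th - 1) + (exp th - 1) * rsum pr L) by ring.
    rewrite exp_plus; fold M.
    apply Rle_trans with ((1 + pr e * (exp th - 1)) * M); [lra|].
    apply Rmult_le_compat_r; [left; apply exp_pos | lra].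
Qed.

Lemma ins_perm a l : Permutation (ins a l) (a :: l).
Proof.
  induction l as [|b t IH]; simpl; [reflexivity|].
  destruct (Nat.leb a b); [reflexivity|].
  eapply perm_trans; [apply perm_skip, IH | apply perm_swap].
Qed.

Lemma srt_perm l : Permutation (srt l) l.
Proof. induction l as [|a t IH]; simpl; [reflexivity | rewrite ins_perm; auto]. Qed.

Lemma srt_length l : length (srt l) = length l.
Proof. apply Permutation_length, srt_perm. Qed.

Lemma srt_inj l1 l2 : srt l1 = srt l2 -> Permutation l1 l2.
Proof. intros H; rewrite <- (srt_perm l1), <- (srt_perm l2), H; reflexivity. Qed.

Lemma In_pairs i j n : (i < j < n)%nat -> In [i; j] (pairs n).
Proof.
  intros H; apply in_flat_map; exists j; split; [apply in_seq; lia|].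
  apply in_map_iff; exists i; split; [reflexivity | apply in_seq; lia].
Qed.

Lemma In_triples i j k n : (i < j < k /\ k < n)%nat -> In [i; j; k] (triples n).
Proof.
  intros H; apply in_flat_map; exists k; split; [apply in_seq; lia|].
  apply in_flat_map; exists j; split; [apply in_seq; lia|].
  apply in_map_iff; exists i; split; [reflexivity | apply in_seq; lia].
Qed.

Lemma srt2_In_pairs a b n : a <> b -> (a < n)%nat -> (b < n)%nat -> In (srt [a; b]) (pairs n).
Proof. intros; simpl; destruct (Nat.leb_spec a b); apply In_pairs; lia. Qed.

Lemma srt3_In_triples a b c n : a <> b -> a <> c -> b <> c ->
  (a < n)%nat -> (b < n)%nat -> (c < n)%nat -> In (srt [a; b; c]) (triples n).
Proof.
  intros; simpl.
  repeat match goal with |- context [Nat.leb ?x ?y] => destruct (Nat.leb_spec x y); simpl end;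
    apply In_triples; lia.
Qed.

Lemma pairs_length n e : In e (pairs n) -> length e = 2%nat.
Proof.
  intros H; apply in_flat_map in H as [j [_ H]]; apply in_map_iff in H as [i [<- _]]; reflexivity.
Qed.

Lemma triples_length n e : In e (triples n) -> length e = 3%nat.
Proof.
  intros H; apply in_flat_map in H as [k [_ H]]; apply in_flat_map in H as [j [_ H]].
  apply in_map_iff in H as [i [<- _]]; reflexivity.
Qed.

(** * One step of the propagation process *)

Definition card (n : nat) (P : nat -> bool) : nat := length (filter P (seq 0 n)).

Definition disjoint (Y D : nat -> bool) : Prop := forall u, Y u = true -> D u = false.

Definition count_in (D : nat -> bool) (e : list nat) : nat := length (filter D e).

(* Every edge probed at step t contains v_t and an unexplored vertex, and v_t then joins D;
   so an edge with two vertices outside D has never been probed. *)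
Definition fresh (D : nat -> bool) (e : list nat) : Prop := (count_in D e + 2 <= length e)%nat.

Definition probe_edges (v : nat) (Dl : list nat) (u : nat) : list (list nat) :=
  srt [v; u] :: map (fun w => srt [v; u; w]) Dl.

Definition probed (n : nat) (Y D : nat -> bool) (v : nat) : list (list nat) :=
  flat_map (probe_edges v (filter D (seq 0 n)))
           (filter (fun u => negb (Y u) && negb (D u)) (seq 0 n)).

Definition discovered (n : nat) (H : hgraph) (v : nat) (Y D : nat -> bool) (u : nat) : bool :=
  Nat.ltb u n && negb (Y u) && negb (D u) &&
  (H (srt [v; u]) || existsb (fun w => D w && H (srt [v; u; w])) (seq 0 n)).

Definition edge_prob (P2 P3 : R) (e : list nat) : R := if Nat.eqb (length e) 2 then P2 else P3.

Lemma edge_prob_unit P2 P3 e : 0 <= P2 <= 1 -> 0 <= P3 <= 1 -> 0 <= edge_prob P2 P3 e <= 1.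
Proof. unfold edge_prob; destruct (Nat.eqb _ _); auto. Qed.

Lemma step_unfold n H sel Y D : step n H sel Y D =
  (fun u => (Y u || discovered n H (sel Y D) Y D u) && negb (Nat.eqb u (sel Y D)),
   fun u => D u || Nat.eqb u (sel Y D)).
Proof. reflexivity. Qed.

Lemma In_probed n Y D v e : In e (probed n Y D v) ->
  exists u, (u < n)%nat /\ Y u = false /\ D u = false /\
   (e = srt [v; u] \/ exists w, (w < n)%nat /\ D w = true /\ e = srt [v; u; w]).
Proof.
  intros H; apply in_flat_map in H as [u [Hu He]].
  apply filter_In in Hu as [Hu Hg]; apply andb_true_iff in Hg as [Yu Du].
  apply negb_true_iff in Yu, Du; apply in_seq in Hu.
  exists u; repeat split; auto; try lia.
  destruct He as [He|He]; [left; auto | right].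
  apply in_map_iff in He as [w [<- Hw]]; apply filter_In in Hw as [Hw Dw]; apply in_seq in Hw.
  exists w; repeat split; auto; lia.
Qed.

Lemma count_in_srt D l : count_in D (srt l) = count_in D l.
Proof. apply filter_perm_length, srt_perm. Qed.

Lemma fresh_mono (D D' : nat -> bool) e :
  (forall x, D x = true -> D' x = true) -> fresh D' e -> fresh D e.
Proof. unfold fresh, count_in; intros HD; pose proof (filter_length_mono D D' e HD); lia. Qed.

Lemma probed_fresh n Y D v e : (v < n)%nat -> Y v = true -> disjoint Y D ->
  In e (probed n Y D v) -> In e (pairs n ++ triples n) /\ fresh D e.
Proof.
  intros Hv Yv Hdis He; pose proof (Hdis v Yv) as Dv.
  apply In_probed in He as [u [Hu [Yu [Du [->|[w [Hw [Dw ->]]]]]]]];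
    unfold fresh; rewrite count_in_srt, srt_length; unfold count_in; simpl.
  - rewrite Dv, Du; split; [|simpl; lia].
    apply in_or_app; left; apply srt2_In_pairs; auto; congruence.
  - rewrite Dv, Du, Dw; split; [|simpl; lia].
    apply in_or_app; right; apply srt3_In_triples; auto; congruence.
Qed.

Lemma probed_not_fresh n Y D v e : In e (probed n Y D v) ->
  ~ fresh (fun x => D x || Nat.eqb x v) e.
Proof.
  intros He; apply In_probed in He as [u [_ [_ [_ [->|[w [_ [Dw ->]]]]]]]];
    unfold fresh; rewrite count_in_srt, srt_length; unfold count_in; simpl;
    rewrite Nat.eqb_refl, orb_true_r; simpl; rewrite ?Dw; simpl;
    destruct (D u || Nat.eqb u v); simpl; lia.
Qed.

Lemma probed_NoDup n Y D v : Y v = true -> disjoint Y D -> NoDup (probed n Y D v).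
Proof.
  intros Yv Hdis; pose proof (Hdis v Yv) as Dv.
  assert (Hlen : forall l l', srt l = srt l' -> length l = length l')
    by (intros l l' E; rewrite <- (srt_length l), <- (srt_length l'), E; reflexivity).
  apply NoDup_flat_map; [apply NoDup_filter, seq_NoDup | |].
  - intros u _; constructor.
    + intros Hin; apply in_map_iff in Hin as [w [Hw _]]; apply Hlen in Hw; discriminate.
    + apply FinFun.Injective_map_NoDup_in; [|apply NoDup_filter, seq_NoDup].
      intros x y _ _ Hxy; apply srt_inj, Permutation_cons_inv, Permutation_cons_inv in Hxy.
      apply Permutation_length_1 in Hxy; exact Hxy.
  - intros x y e Hx Hy Hxy Hex Hey.
    apply filter_In in Hx as [_ Hx], Hy as [_ Hy].
    apply andb_true_iff in Hx as [_ Dx], Hy as [_ Dy]; apply negb_true_iff in Dx, Dy.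
    destruct Hex as [<-|Hex], Hey as [Hey|Hey].
    + apply srt_inj, Permutation_cons_inv, Permutation_length_1 in Hey; auto.
    + apply in_map_iff in Hey as [w [Hw _]]; apply Hlen in Hw; discriminate.
    + apply in_map_iff in Hex as [w [Hw _]]; subst e; apply Hlen in Hey; discriminate.
    + apply in_map_iff in Hex as [w [<- Hw]], Hey as [w' [Hw' Hw'in]].
      apply filter_In in Hw as [_ Dw], Hw'in as [_ Dw'].
      apply srt_inj, Permutation_cons_inv in Hw'.
      assert (Hin : In y [x; w]) by (eapply Permutation_in; [exact Hw' | left; auto]).
      destruct Hin as [|[|[]]]; subst; congruence.
Qed.

Lemma edge_prob_pair P2 P3 a b : edge_prob P2 P3 (srt [a; b]) = P2.
Proof. unfold edge_prob; rewrite srt_length; reflexivity. Qed.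

Lemma edge_prob_triple P2 P3 a b c : edge_prob P2 P3 (srt [a; b; c]) = P3.
Proof. unfold edge_prob; rewrite srt_length; reflexivity. Qed.

Lemma rsum_probe_edges P2 P3 v Dl u :
  rsum (edge_prob P2 P3) (probe_edges v Dl u) = P2 + INR (length Dl) * P3.
Proof.
  unfold probe_edges; cbn [rsum]; rewrite edge_prob_pair; f_equal.
  induction Dl as [|w t IH]; cbn [map rsum length]; [simpl; ring|].
  rewrite IH, edge_prob_triple, S_INR; ring.
Qed.

Lemma rsum_probed_le n Y D v P2 P3 : 0 <= P2 -> 0 <= P3 ->
  rsum (edge_prob P2 P3) (probed n Y D v) <= INR n * (P2 + INR (card n D) * P3).
Proof.
  intros H2 H3; pose proof (pos_INR (card n D)).
  eapply Rle_trans; [apply rsum_flat_map_le with (c := P2 + INR (card n D) * P3)|].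
  - intros u _; rewrite rsum_probe_edges; unfold card; lra.
  - apply Rmult_le_compat_r; [nra|]; apply le_INR.
    eapply Nat.le_trans; [apply filter_length_le | rewrite length_seq; lia].
Qed.

Lemma card_step_active n H sel Y D : (sel Y D < n)%nat -> Y (sel Y D) = true ->
  (card n (fst (step n H sel Y D)) + 1
     <= card n Y + length (filter H (probed n Y D (sel Y D))))%nat.
Proof.
  intros Hv Yv; rewrite step_unfold; simpl fst; set (v := sel Y D) in *; unfold card.
  eapply Nat.le_trans;
    [apply (filter_length_remove (fun u => Y u || discovered n H v Y D u));
       [apply in_seq; lia | rewrite Yv; reflexivity]|].
  eapply Nat.le_trans; [apply filter_length_orb|].
  apply Nat.add_le_mono_l, filter_length_cover.
  intros u Hu; unfold discovered in Hu.
  apply andb_true_iff in Hu as [Hu Hedge]; apply andb_true_iff in Hu as [Hu Du].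
  apply andb_true_iff in Hu as [_ Yu]; split; [rewrite Yu, Du; reflexivity|].
  apply orb_true_iff in Hedge as [Hedge|Hedge]; [exists (srt [v; u]); split; [left|]; auto|].
  apply existsb_exists in Hedge as [w [Hw Hedge]]; apply andb_true_iff in Hedge as [Dw Hedge].
  exists (srt [v; u; w]); split; [|exact Hedge].
  right; apply in_map_iff; exists w; split; [|apply filter_In]; auto.
Qed.

Lemma card_step_inactive n H sel Y D :
  (card n (snd (step n H sel Y D)) <= S (card n D))%nat.
Proof.
  unfold card; simpl.
  pose proof (filter_length_orb D (fun u => Nat.eqb u (sel Y D)) (seq 0 n)).
  pose proof (filter_length_eqb_le1 (sel Y D) (seq 0 n) (seq_NoDup n 0)).
  lia.
Qed.

Lemma step_disjoint n H sel Y D :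
  disjoint Y D -> disjoint (fst (step n H sel Y D)) (snd (step n H sel Y D)).
Proof.
  intros Hdis u; rewrite step_unfold; simpl; intros Hu.
  apply andb_true_iff in Hu as [Hu Huv]; apply negb_true_iff in Huv; rewrite Huv, orb_false_r.
  apply orb_true_iff in Hu as [Hu|Hu]; [apply Hdis; exact Hu|].
  unfold discovered in Hu; apply andb_true_iff in Hu as [Hu _].
  apply andb_true_iff in Hu as [_ Du]; apply negb_true_iff; exact Du.
Qed.

Lemma step_local n H H' sel Y D :
  (forall e, In e (probed n Y D (sel Y D)) -> H e = H' e) ->
  step n H sel Y D = step n H' sel Y D.
Proof.
  intros Hag; rewrite !step_unfold; f_equal; extensionality u; f_equal; f_equal.
  unfold discovered; set (v := sel Y D) in *.
  destruct (Nat.ltb u n) eqn:Hu, (Y u) eqn:Yu, (D u) eqn:Du; simpl; try reflexivity.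
  apply Nat.ltb_lt in Hu.
  assert (Hun : In u (filter (fun u => negb (Y u) && negb (D u)) (seq 0 n)))
    by (apply filter_In; split; [apply in_seq; lia | rewrite Yu, Du; reflexivity]).
  rewrite Hag by (apply in_flat_map; exists u; split; [|left]; auto).
  f_equal; apply existsb_ext_in; intros w Hw; destruct (D w) eqn:Dw; [simpl|reflexivity].
  apply Hag, in_flat_map; exists u; split; [exact Hun | right].
  apply in_map_iff; exists w; split; [|apply filter_In]; auto.
Qed.

Lemma expect_split pr E L acc F : NoDup E -> NoDup L -> incl E L ->
  expect (items pr L) acc F
  = expect (items pr E) acc (fun H => expect (items pr (remove_edges E L)) H F).
Proof.
  intros HE HL HEL; rewrite <- expect_app; unfold items; rewrite <- map_app.
  apply expect_perm; [apply Permutation_map | rewrite map_map; simpl; rewrite map_id; exact HL].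
  apply NoDup_Permutation; [exact HL| |].
  - apply NoDup_app; [exact HE | apply NoDup_filter, HL|].
    intros e He He'; apply In_remove_edges in He'; tauto.
  - intros e; rewrite in_app_iff, In_remove_edges.
    split; [intros; destruct (in_dec (list_eq_dec Nat.eq_dec) e E)|intros [He|[]]]; auto.
Qed.

(** * The supermartingale *)

Definition rate (x : R) : R := 1 - x + ln x.

Lemma rate_ge_tilt x s : 0 < x <= 1 -> s <= x -> ln x + (exp (- ln x) - 1) * s <= rate x.
Proof.
  intros Hx Hs; rewrite exp_Ropp, exp_ln by apply Hx.
  assert (1 <= / x) by (rewrite <- Rinv_1; apply Rinv_le_contravar; lra).
  assert ((/ x - 1) * s <= (/ x - 1) * x) by (apply Rmult_le_compat_l; lra).
  replace ((/ x - 1) * x) with (1 - x) in * by (field; lra).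
  unfold rate; lra.
Qed.

Fixpoint survives (n : nat) (H : hgraph) (sel : selector) (k : nat) (Y D : nat -> bool) : bool :=
  match k with
  | O => true
  | S k => existsb Y (seq 0 n) &&
           survives n H sel k (fst (step n H sel Y D)) (snd (step n H sel Y D))
  end.

Definition unrevealed_in (n : nat) (D : nat -> bool) (L : list (list nat)) : Prop :=
  forall e, In e (pairs n ++ triples n) -> fresh D e -> In e L.

Section Survival.

Variables (n : nat) (sel : selector) (P2 P3 : R) (lam : nat -> R).
Hypotheses (sel_valid : valid_sel n sel) (P2_unit : 0 <= P2 <= 1) (P3_unit : 0 <= P3 <= 1)
  (lam_pos : forall s, 0 < lam s) (lam_mono : forall s, lam s <= lam (S s))
  (lam_bounds_probes : forall t, INR n * (P2 + INR t * P3) <= lam t).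

Lemma lam_le_add t k : lam t <= lam (t + k).
Proof.
  induction k as [|k IH]; [rewrite Nat.add_0_r; lra|].
  rewrite Nat.add_succ_r; eapply Rle_trans; [exact IH | apply lam_mono].
Qed.

Lemma neg_ln_lam_nonneg t : lam t <= 1 -> 0 <= - ln (lam t).
Proof. intros H1; pose proof (ln_le_ln _ _ (lam_pos t) H1); rewrite ln_1 in *; lra. Qed.

(* With theta_t = -ln lam_t, exp (theta_t |Y_t| + sum_{s<t} rate lam_s) is a supermartingale
   up to the first time Y_t is empty. *)
Definition survival_bound_holds (t k : nat) : Prop :=
  forall Y D L acc, disjoint Y D -> (card n D <= t)%nat -> NoDup L -> unrevealed_in n D L ->
  lam (t + k) <= 1 ->
  expect (items (edge_prob P2 P3) L) acc (indicator (fun H => survives n H sel k Y D))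
    <= exp (- ln (lam t) * INR (card n Y) + rsum (fun s => rate (lam s)) (seq t k)).

Lemma survival_bound_zero t : survival_bound_holds t 0.
Proof.
  intros Y D L acc _ _ _ _ Hlam1; rewrite Nat.add_0_r in Hlam1.
  unfold indicator; simpl survives; rewrite expect_const; simpl rsum.
  pose proof (neg_ln_lam_nonneg t Hlam1).
  assert (0 <= - ln (lam t) * INR (card n Y)) by (apply Rmult_le_pos; [lra | apply pos_INR]).
  pose proof (exp_ineq1_le (- ln (lam t) * INR (card n Y) + 0)); lra.
Qed.

(* The probed edges of step t are conditioned upon: given them, the first step is determined,
   and the remaining process only sees the other edges. *)
Lemma expect_after_step_le t k Y D L a :
  survival_bound_holds (S t) k -> disjoint Y D -> (card n D <= t)%nat -> NoDup L ->
  unrevealed_in n D L -> lam (t + S k) <= 1 -> (sel Y D < n)%nat -> Y (sel Y D) = true ->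
  expect (items (edge_prob P2 P3) (remove_edges (probed n Y D (sel Y D)) L)) a
    (indicator (fun H => survives n H sel k (fst (step n H sel Y D)) (snd (step n H sel Y D))))
  <= exp (- ln (lam t) * (INR (card n Y) - 1) + rsum (fun s => rate (lam s)) (seq (S t) k))
     * exp (- ln (lam t) * INR (length (filter a (probed n Y D (sel Y D))))).
Proof.
  intros IH Hdis HD HN Hunrev Hlam1 Hv Yv; set (v := sel Y D) in *.
  rewrite (expect_ext _ a _
    (indicator (fun H => survives n H sel k (fst (step n a sel Y D)) (snd (step n a sel Y D))))).
  2:{ intros H Hag; unfold indicator; rewrite (step_local n H a); [reflexivity|].
      intros e He; apply Hag; rewrite map_fst_items, In_remove_edges; tauto. }
  eapply Rle_trans; [apply IH|].
  - apply step_disjoint, Hdis.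
  - pose proof (card_step_inactive n a sel Y D); lia.
  - apply NoDup_filter, HN.
  - intros e He Hfr; apply In_remove_edges; rewrite step_unfold in Hfr; split.
    + apply Hunrev; [exact He|]; revert Hfr; apply fresh_mono.
      intros x Dx; simpl; rewrite Dx; reflexivity.
    + intros HeE; exact (probed_not_fresh n Y D v e HeE Hfr).
  - replace (S t + k)%nat with (t + S k)%nat by lia; exact Hlam1.
  - rewrite <- exp_plus; apply exp_le_exp.
    pose proof (le_INR _ _ (card_step_active n a sel Y D Hv Yv)) as Hcard.
    rewrite !plus_INR in Hcard; simpl (INR 1) in Hcard; fold v in Hcard.
    assert (Hlamt : lam t <= 1) by (eapply Rle_trans; [apply (lam_le_add t (S k)) | exact Hlam1]).
    pose proof (neg_ln_lam_nonneg t Hlamt).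
    assert (Hth : - ln (lam (S t)) <= - ln (lam t))
      by (pose proof (ln_le_ln _ _ (lam_pos t) (lam_mono t)); lra).
    apply Rmult_le_compat_l with (r := - ln (lam t)) in Hcard; [|assumption].
    assert (- ln (lam (S t)) * INR (card n (fst (step n a sel Y D)))
            <= - ln (lam t) * INR (card n (fst (step n a sel Y D))))
      by (apply Rmult_le_compat_r; [apply pos_INR | exact Hth]).
    lra.
Qed.

Lemma survival_bound_step t k : survival_bound_holds (S t) k -> survival_bound_holds t (S k).
Proof.
  intros IH Y D L acc Hdis HD HN Hunrev Hlam1.
  unfold indicator at 1; cbn [survives].
  destruct (existsb Y (seq 0 n)) eqn:Hex; simpl andb; [|rewrite expect_const; left; apply exp_pos].
  apply existsb_exists in Hex as [u0 [Hu0 Yu0]]; apply in_seq in Hu0.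
  destruct (sel_valid Y D) as [Hv Yv]; [exists u0; split; [lia | exact Yu0]|].
  set (E := probed n Y D (sel Y D)).
  assert (HEL : incl E L)
    by (intros e He; apply Hunrev; apply (probed_fresh n Y D (sel Y D)); auto).
  rewrite (expect_split _ E L) by (auto; apply probed_NoDup; auto).
  assert (Hlamt : lam t <= 1) by (eapply Rle_trans; [apply (lam_le_add t (S k)) | exact Hlam1]).
  eapply Rle_trans.
  { apply expect_le; [apply items_in_unit; intros; apply edge_prob_unit; assumption|].
    intros H _; apply (expect_after_step_le t k Y D L H); assumption. }
  rewrite expect_scale.
  eapply Rle_trans.
  { apply Rmult_le_compat_l; [left; apply exp_pos|].
    apply expect_exp_count_le; [intros; apply edge_prob_unit; assumption
      | apply neg_ln_lam_nonneg, Hlamt | apply probed_NoDup; auto]. }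
  rewrite <- exp_plus; apply exp_le_exp; cbn [seq rsum].
  assert (Hsum : rsum (edge_prob P2 P3) E <= lam t).
  { eapply Rle_trans; [apply rsum_probed_le; apply P2_unit || apply P3_unit|].
    eapply Rle_trans; [|apply lam_bounds_probes].
    apply Rmult_le_compat_l; [apply pos_INR|]; apply Rplus_le_compat_l.
    apply Rmult_le_compat_r; [apply P3_unit | apply le_INR, HD]. }
  pose proof (rate_ge_tilt (lam t) _ (conj (lam_pos t) Hlamt) Hsum); unfold E in *; lra.
Qed.

Lemma survives_expect_le k : forall t, survival_bound_holds t k.
Proof.
  induction k as [|k IH]; intros t; [apply survival_bound_zero | apply survival_bound_step, IH].
Qed.

End Survival.

(** * The exponent *)

Definition rate_primitive (x : R) : R := x * ln x - x ^ 2 / 2.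

(* rate is the derivative of rate_primitive and rate' = 1/x - 1 >= -1, which bounds the
   error of the left Riemann sum. *)
Lemma rate_le_primitive_increment a b : 0 < a -> 0 < b ->
  rate a * (b - a) <= rate_primitive b - rate_primitive a + (b - a) ^ 2 / 2.
Proof.
  intros Ha Hb; unfold rate, rate_primitive.
  assert (H : ln (a / b) <= a / b - 1) by (apply ln_le_sub1, Rdiv_lt_0_compat; assumption).
  unfold Rdiv in H; rewrite ln_mult, ln_Rinv in H by (try apply Rinv_0_lt_compat; assumption).
  assert (b * (ln a - ln b) <= a - b).
  { replace (a - b) with (b * (a * / b - 1)) by (field; lra).
    apply Rmult_le_compat_l; lra. }
  nra.
Qed.

Lemma rsum_rate_le a r L m : 0 < a -> 0 < r -> 0 < L ->
  rsum (fun s => rate (a + r * INR s / L)) (seq 0 m)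
    <= L / r * (rate_primitive (a + r * INR m / L) - rate_primitive a) + INR m * (r / (2 * L)).
Proof.
  intros Ha Hr HL; induction m as [|m IH].
  - replace (a + r * INR 0 / L) with a by (simpl; field; lra); simpl; lra.
  - rewrite seq_S, rsum_app; cbn [rsum]; simpl (0 + m)%nat.
    set (x := a + r * INR m / L); set (y := a + r * INR (S m) / L).
    assert (Hxy : y - x = r / L) by (unfold x, y; rewrite S_INR; field; lra).
    assert (Hx : 0 < x).
    { unfold x; pose proof (pos_INR m).
      assert (0 <= r * INR m / L)
        by (apply Rmult_le_pos; [nra | left; apply Rinv_0_lt_compat; lra]).
      lra. }
    assert (HrL : 0 < r / L) by (apply Rdiv_lt_0_compat; assumption).
    pose proof (rate_le_primitive_increment x y Hx ltac:(lra)) as Hinc; rewrite Hxy in Hinc.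
    assert (rate x <= L / r * (rate_primitive y - rate_primitive x) + r / (2 * L)).
    { replace (rate x) with (L / r * (rate x * (r / L))) by (field; lra).
      replace (r / (2 * L)) with (L / r * ((r / L) ^ 2 / 2)) by (field; lra).
      rewrite <- Rmult_plus_distr_l.
      apply Rmult_le_compat_l; [left; apply Rdiv_lt_0_compat|]; lra. }
    fold x in IH; rewrite S_INR; lra.
Qed.

(* Superadditivity of x ln x, and -t ln t <= 2 sqrt t. *)
Lemma rate_primitive_sub_le x z : 0 <= x <= 1 -> 0 < z <= 1 ->
  rate_primitive x - rate_primitive (x + z ^ 2) <= 4 * z.
Proof.
  intros Hx Hz; unfold rate_primitive.
  assert (Hz2 : 0 < z ^ 2) by nra.
  assert (Hsup : x * ln x <= x * ln (x + z ^ 2)).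
  { destruct (proj1 Hx) as [Hx0|<-]; [|lra].
    apply Rmult_le_compat_l; [lra | apply ln_le_ln; lra]. }
  assert (Hz2l : z ^ 2 * ln (z ^ 2) <= z ^ 2 * ln (x + z ^ 2))
    by (apply Rmult_le_compat_l; [lra | apply ln_le_ln; lra]).
  assert (Hlnz : - ln z <= / z).
  { pose proof (ln_le_sub1 (/ z) (Rinv_0_lt_compat z (proj1 Hz))).
    rewrite ln_Rinv in H by apply Hz; lra. }
  assert (Hsq : - (z ^ 2 * ln (z ^ 2)) <= 2 * z).
  { rewrite ln_pow by apply Hz; simpl INR.
    assert (z ^ 2 * - ln z <= z ^ 2 * / z) by (apply Rmult_le_compat_l; lra).
    replace (z ^ 2 * / z) with z in H by (field; lra); lra. }
  assert (Hquad : (x + z ^ 2) ^ 2 / 2 - x ^ 2 / 2 <= 3 / 2 * z).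
  { assert (z ^ 2 <= z) by nra.
    assert (x * z ^ 2 <= z ^ 2) by nra.
    assert (z ^ 2 * z ^ 2 <= z ^ 2) by nra.
    replace ((x + z ^ 2) ^ 2 / 2 - x ^ 2 / 2) with (x * z ^ 2 + z ^ 2 * z ^ 2 / 2) by field.
    lra. }
  replace ((x + z ^ 2) * ln (x + z ^ 2)) with (x * ln (x + z ^ 2) + z ^ 2 * ln (x + z ^ 2))
    by ring.
  lra.
Qed.

Lemma rate_primitive_le x : 0 < x <= 1 -> rate_primitive x <= 1 / 2 - x.
Proof.
  intros Hx; unfold rate_primitive.
  assert (ln x <= 0) by (rewrite <- ln_1; apply ln_le_ln; lra).
  nra.
Qed.

Lemma Ier_primitive eps r : 0 < r ->
  Ier eps r = / r * (- 1 / 2 - rate_primitive (1 - eps)).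
Proof. intros Hr; unfold Ier, rate_primitive; field; lra. Qed.

Lemma linear_at_floor a r L m : 0 < r -> 0 < L -> INR m <= (1 - a) / r * L < INR m + 1 ->
  1 - r / L < a + r * INR m / L <= 1.
Proof.
  intros Hr HL [Hm1 Hm2].
  replace (a + r * INR m / L) with (a + r / L * INR m) by (field; lra).
  assert (HrL : 0 < r / L) by (apply Rdiv_lt_0_compat; assumption).
  assert (r / L * ((1 - a) / r * L) = 1 - a) by (field; lra).
  assert (r / L * INR m <= r / L * ((1 - a) / r * L)) by (apply Rmult_le_compat_l; lra).
  assert (r / L * ((1 - a) / r * L) < r / L * (INR m + 1)) by (apply Rmult_lt_compat_l; lra).
  lra.
Qed.

Lemma exponent_le eps r delta a L m :
  0 < eps <= 1 -> 0 < r -> 0 < delta -> 1 - eps < a < 1 ->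
  rate_primitive (1 - eps) - rate_primitive a <= r * delta / 4 ->
  (3 / 2 - 2 * ln a) * 4 / (3 * delta) <= L ->
  INR m <= (1 - a) / r * L < INR m + 1 ->
  - 2 * ln a + rsum (fun s => rate (a + r * INR s / L)) (seq 0 m) <= (Ier eps r + delta) * L.
Proof.
  intros Heps Hr Hd Ha Hprim HL Hm.
  assert (Hla : ln a < 0) by (rewrite <- ln_1; apply ln_increasing; lra).
  assert (HL0 : 0 < L).
  { eapply Rlt_le_trans; [|exact HL].
    apply Rdiv_lt_0_compat; [|lra]; apply Rmult_lt_0_compat; lra. }
  assert (HK : 0 < L / r) by (apply Rdiv_lt_0_compat; assumption).
  assert (0 <= r * INR m / L)
    by (apply Rmult_le_pos;
        [apply Rmult_le_pos; [lra | apply pos_INR] | left; apply Rinv_0_lt_compat, HL0]).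
  pose proof (linear_at_floor a r L m Hr HL0 Hm) as Hlm.
  pose proof (rsum_rate_le a r L m ltac:(lra) Hr HL0) as Hsum.
  pose proof (rate_primitive_le (a + r * INR m / L) ltac:(lra)).
  assert (INR m * (r / (2 * L)) <= 1 / 2).
  { apply Rle_trans with ((1 - a) / r * L * (r / (2 * L))).
    - apply Rmult_le_compat_r; [left; apply Rdiv_lt_0_compat | apply Hm]; lra.
    - replace ((1 - a) / r * L * (r / (2 * L))) with ((1 - a) / 2) by (field; lra); lra. }
  assert (L / r * (rate_primitive (a + r * INR m / L) - rate_primitive a)
          <= L / r * ((- 1 / 2 + r / L) - (rate_primitive (1 - eps) - r * delta / 4)))
    by (apply Rmult_le_compat_l; lra).
  assert (L / r * (r / L) = 1) by (field; lra).
  assert (L / r * (r * delta / 4) = L * delta / 4) by (field; lra).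
  assert (Ier eps r * L = L / r * (- 1 / 2 - rate_primitive (1 - eps)))
    by (rewrite Ier_primitive by exact Hr; field; lra).
  assert (3 / 2 - 2 * ln a <= 3 * delta / 4 * L).
  { apply Rmult_le_compat_r with (r := 3 * delta / 4) in HL; [|lra].
    replace ((3 / 2 - 2 * ln a) * 4 / (3 * delta) * (3 * delta / 4)) with (3 / 2 - 2 * ln a)
      in HL by (field; lra).
    lra. }
  lra.
Qed.

Lemma rate_primitive_right_near x c : 0 <= x < 1 -> 0 < c ->
  exists a, x < a < 1 /\ rate_primitive x - rate_primitive a <= c.
Proof.
  intros Hx Hc; set (z := Rmin ((1 - x) / 2) (c / 4)).
  assert (Hz0 : 0 < z) by (apply Rmin_glb_lt; lra).
  assert (Hz1 : z <= (1 - x) / 2) by apply Rmin_l.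
  assert (Hz2 : z <= c / 4) by apply Rmin_r.
  exists (x + z ^ 2); split; [split; nra|].
  pose proof (rate_primitive_sub_le x z ltac:(lra) ltac:(lra)); lra.
Qed.

(** * The component size and the probability space *)

Lemma survives_of_run n H sel k fuel Y D t :
  (t + k <= run n H sel fuel Y D t)%nat -> survives n H sel k Y D = true.
Proof.
  revert fuel Y D t; induction k as [|k IH]; intros fuel Y D t Hrun; simpl; [reflexivity|].
  destruct fuel as [|f]; simpl in Hrun; [lia|].
  destruct (existsb Y (seq 0 n)); simpl; [|lia].
  apply (IH f _ _ (S t)); lia.
Qed.

Definition initial (v1 v2 : nat) : nat -> bool := fun u => Nat.eqb u v1 || Nat.eqb u v2.

Lemma big_event_survives eps r n sel v1 v2 m H :
  INR m <= K0 eps r * ln (INR n) -> big_event eps r n sel v1 v2 H = true ->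
  survives n H sel m (initial v1 v2) (fun _ => false) = true.
Proof.
  unfold big_event; destruct (Rle_dec _ _) as [Hbig|]; intros Hm; [|discriminate].
  intros _; apply (survives_of_run n H sel m (S n) _ _ 0), INR_le.
  eapply Rle_trans; [|exact Hbig]; rewrite Nat.add_0_l; exact Hm.
Qed.

Lemma Gprob_expect n P2 P3 ev : Gprob n P2 P3 ev =
  expect (items (edge_prob P2 P3) (nodup (list_eq_dec Nat.eq_dec) (pairs n ++ triples n)))
    (fun _ => false) (indicator ev).
Proof.
  unfold Gprob; rewrite prob_aux_expect, expect_nodup; f_equal.
  unfold items; rewrite map_app; f_equal; apply map_ext_in; intros e He; unfold edge_prob.
  - rewrite (pairs_length n e He); reflexivity.
  - rewrite (triples_length n e He); reflexivity.
Qed.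

Lemma Gprob_mono n P2 P3 (ev ev' : hgraph -> bool) : 0 <= P2 <= 1 -> 0 <= P3 <= 1 ->
  (forall H, ev H = true -> ev' H = true) -> Gprob n P2 P3 ev <= Gprob n P2 P3 ev'.
Proof.
  intros HP2 HP3 Hev; rewrite !Gprob_expect; apply expect_le.
  - apply items_in_unit; intros e; apply edge_prob_unit; assumption.
  - intros H _; unfold indicator; destruct (ev H) eqn:E; [rewrite (Hev H E)|destruct (ev' H)]; lra.
Qed.

Lemma card_initial n v1 v2 : (card n (initial v1 v2) <= 2)%nat.
Proof.
  unfold card, initial.
  pose proof (filter_length_orb (fun u => Nat.eqb u v1) (fun u => Nat.eqb u v2) (seq 0 n)).
  pose proof (filter_length_eqb_le1 v1 (seq 0 n) (seq_NoDup n 0)).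
  pose proof (filter_length_eqb_le1 v2 (seq 0 n) (seq_NoDup n 0)).
  lia.
Qed.

Lemma INR_ge1_of_ln n : 1 <= ln (INR n) -> 1 <= INR n.
Proof.
  destruct n as [|n].
  - unfold ln; destruct (Rlt_dec 0 (INR 0)) as [H0|]; simpl in *; intros; lra.
  - rewrite S_INR; pose proof (pos_INR n); lra.
Qed.

Lemma edge_probs_unit eps r n : 0 < eps <= 1 -> 0 < r -> 1 <= ln (INR n) -> r <= ln (INR n) ->
  0 <= p2 eps n <= 1 /\ 0 <= p3 r n <= 1.
Proof.
  intros Heps Hr HL HrL.
  pose proof (INR_ge1_of_ln n HL) as Hn.
  unfold p2, p3; split; split.
  - apply Rmult_le_pos; [|left; apply Rinv_0_lt_compat]; lra.
  - apply Rmult_le_reg_r with (INR n); [lra|]; unfold Rdiv; rewrite Rmult_assoc, Rinv_l; lra.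
  - left; apply Rdiv_lt_0_compat; nra.
  - apply Rmult_le_reg_r with (INR n * ln (INR n)); [nra|].
    unfold Rdiv; rewrite Rmult_assoc, Rinv_l; nra.
Qed.

Lemma Gprob_survives_le n sel eps r a m v1 v2 :
  valid_sel n sel -> 0 < eps <= 1 -> 0 < r -> 1 <= ln (INR n) -> r <= ln (INR n) ->
  1 - eps <= a -> 0 < a -> a + r * INR m / ln (INR n) <= 1 ->
  Gprob n (p2 eps n) (p3 r n) (fun H => survives n H sel m (initial v1 v2) (fun _ => false))
    <= exp (- 2 * ln a + rsum (fun s => rate (a + r * INR s / ln (INR n))) (seq 0 m)).
Proof.
  intros Hsel Heps Hr HL HrL Ha Ha0 Hlam.
  destruct (edge_probs_unit eps r n Heps Hr HL HrL) as [HP2 HP3].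
  set (L := ln (INR n)) in *.
  set (lam s := a + r * INR s / L).
  assert (Hlam_pos : forall s, 0 < lam s).
  { intros s; unfold lam; pose proof (pos_INR s).
    assert (0 <= r * INR s / L) by (apply Rmult_le_pos; [nra | left; apply Rinv_0_lt_compat; lra]).
    lra. }
  assert (Hlam_mono : forall s, lam s <= lam (S s)).
  { intros s; unfold lam; rewrite S_INR.
    assert (0 < r / L) by (apply Rdiv_lt_0_compat; lra).
    replace (a + r * (INR s + 1) / L) with (a + r * INR s / L + r / L) by (field; lra); lra. }
  assert (Hlam_probes : forall t, INR n * (p2 eps n + INR t * p3 r n) <= lam t).
  { intros t; unfold lam, p2, p3; fold L.
    pose proof (INR_ge1_of_ln n HL).
    replace (INR n * ((1 - eps) / INR n + INR t * (r / (INR n * L))))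
      with (1 - eps + r * INR t / L) by (field; split; lra).
    lra. }
  rewrite Gprob_expect.
  eapply Rle_trans.
  { apply (survives_expect_le n sel _ _ lam Hsel HP2 HP3 Hlam_pos Hlam_mono Hlam_probes m 0);
      [intros ? ? ; reflexivity | unfold card; rewrite filter_false; simpl; lia
      | apply NoDup_nodup | intros e He _; apply nodup_In, He | exact Hlam]. }
  apply exp_le_exp, Rplus_le_compat_r.
  assert (Hlam0 : lam 0%nat = a) by (unfold lam; simpl; field; lra).
  rewrite Hlam0.
  assert (ln a <= 0).
  { rewrite <- ln_1; apply ln_le_ln; [exact Ha0|].
    apply Rle_trans with (lam m); [|exact Hlam].
    rewrite <- Hlam0; apply (lam_le_add lam Hlam_mono 0 m). }
  pose proof (le_INR _ _ (card_initial n v1 v2)); simpl in H0.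
  nra.
Qed.

Lemma K0_ge eps r x : 0 < r -> 0 <= eps -> x <= eps -> x / r <= K0 eps r.
Proof.
  intros Hr Heps Hx; unfold K0; eapply Rle_trans; [|apply Rmax_r].
  unfold Rdiv; apply Rmult_le_compat_r; [left; apply Rinv_0_lt_compat|]; lra.
Qed.

Lemma nat_floor x : 0 <= x -> exists m : nat, INR m <= x < INR m + 1.
Proof.
  intros Hx; destruct (base_Int_part x) as [H1 H2].
  assert (Hz : (-1 < Int_part x)%Z) by (apply lt_IZR; simpl; lra).
  exists (Z.to_nat (Int_part x)); rewrite INR_IZR_INZ, Z2Nat.id by lia; lra.
Qed.

Lemma ln_INR_eventually_ge x : exists N : nat, forall n, (N <= n)%nat -> x <= ln (INR n).
Proof.
  destruct (INR_unbounded (exp x)) as [N HN]; exists N; intros n Hn.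
  rewrite <- (ln_exp x); apply ln_le_ln; [apply exp_pos|].
  apply le_INR in Hn; lra.
Qed.

Theorem corollary1 :
  forall eps r : R, 0 < eps <= 1 -> 0 < r ->
  forall delta : R, 0 < delta ->
  exists N : nat, forall n : nat, (N <= n)%nat ->
    forall sel : selector, valid_sel n sel ->
    forall v1 v2 : nat, (v1 < n)%nat -> (v2 < n)%nat -> v1 <> v2 ->
      Gprob n (p2 eps n) (p3 r n) (big_event eps r n sel v1 v2)
        <= Rpower (INR n) (Ier eps r + delta).
Proof.
  intros eps r Heps Hr delta Hd.
  destruct (rate_primitive_right_near (1 - eps) (r * delta / 4)) as [a [Ha Hprim]]; [lra | nra |].
  assert (Hla : ln a < 0) by (rewrite <- ln_1; apply ln_increasing; lra).
  set (Lmin := (3 / 2 - 2 * ln a) * 4 / (3 * delta)).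
  destruct (ln_INR_eventually_ge (Rmax (Rmax 1 r) Lmin)) as [N HN]; exists N.
  intros n Hn sel Hsel v1 v2 _ _ _.
  specialize (HN n Hn); set (L := ln (INR n)) in *.
  pose proof (Rmax_l (Rmax 1 r) Lmin); pose proof (Rmax_r (Rmax 1 r) Lmin).
  pose proof (Rmax_l 1 r); pose proof (Rmax_r 1 r).
  assert (HL1 : 1 <= L) by lra; assert (HrL : r <= L) by lra; assert (HLmin : Lmin <= L) by lra.
  destruct (nat_floor ((1 - a) / r * L)) as [m Hm].
  { apply Rmult_le_pos; [apply Rmult_le_pos; [|left; apply Rinv_0_lt_compat]|]; lra. }
  destruct (edge_probs_unit eps r n Heps Hr HL1 HrL) as [HP2 HP3].
  eapply Rle_trans.
  { apply (Gprob_mono _ _ _ _ (fun H => survives n H sel m (initial v1 v2) (fun _ => false)));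
      [exact HP2 | exact HP3|].
    intros G; apply big_event_survives; fold L.
    eapply Rle_trans; [apply Hm|]; apply Rmult_le_compat_r; [lra | apply K0_ge; lra]. }
  eapply Rle_trans.
  { apply (Gprob_survives_le n sel eps r a m v1 v2);
      [exact Hsel | exact Heps | exact Hr | exact HL1 | exact HrL | lra | lra |].
    fold L; apply linear_at_floor; [exact Hr | lra | exact Hm]. }
  apply exp_le_exp, (exponent_le eps r delta a L m); [exact Heps | exact Hr | exact Hd | exact Ha
    | exact Hprim | exact HLmin | exact Hm].
Qed.
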